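(* In the Fock space setting below, let $N\in\mathbb N$, $\alpha_n\in\mathcal B_n(B)$ for $n\in\{0,1,\ldots,N\}$, fix $i\in I$ and let \[ X=\sum_{n=0}^{N-1}\big(V_{i,n}(\alpha_n)+W_{i,n}(\alpha_n)\big),\qquad Y=X+V_{i,N}(\alpha_N)+W_{i,N}(\alpha_N). \] Then for all $b_0,\ldots,b_N\in B$, \[ \mathcal E(b_0Yb_1Y\cdots b_NY)=b_0\,\alpha_N(b_1\alpha_0,b_2\alpha_0,\ldots,b_N\alpha_0)+\mathcal E(b_0Xb_1X\cdots b_NX), \] where $b_j$ acts as $\lambda(b_j)$.
   Context: Let $B$ be a unital complex Banach algebra, $I$ a set, $\mathbb N=\{1,2,\ldots\}$. $D=\ell^1(I,B)$ is the Banach space of functions $d:I\to B$ with $\sum_i\|d(i)\|<\infty$, with left $B$-action $(bd)(i)=b\,d(i)$; $\delta_i\in D$ is $1$ at $i$ and $0$ elsewhere. $\mathcal F=B\Omega\oplus\bigoplus_{k\ge1}D^{\hat\otimes k}\hat\otimes B$ ($\ell^1$-direct sum of projective tensor products), with $B\Omega$ a copy of $B$ and $\Omega$ its unit. $\lambda(b)$: $b_0\Omega\mapsto(bb_0)\Omega$, $d_1\otimes\cdots\otimes d_k\otimes b_0\mapsto(bd_1)\otimes d_2\otimes\cdots\otimes d_k\otimes b_0$. $P:\mathcal F\to B$ is the projection onto $B\Omega$ killing the other summands, $\mathcal E(X)=P(X\Omega)$. $L_i(b_0\Omega)=\delta_i\otimes b_0$, $L_i(d_1\otimes\cdots\otimes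 d_k\otimes b_0)=\delta_i\otimes d_1\otimes\cdots\otimes d_k\otimes b_0$. $\mathcal B_n(B)$ is the set of bounded multilinear maps $B^n\to B$, $\mathcal B_0(B)=B$. For $n\ge1$, $\alpha_n\in\mathcal B_n(B)$: $V_{i,n}(\alpha_n)$ and $W_{i,n}(\alpha_n)$ vanish on $B\Omega$ and on $d_1\otimes\cdots\otimes d_k\otimes b_0$ with $k<n$; for $k=n$ they give $\alpha_n(d_1(i),\ldots,d_n(i))b_0\Omega$ and $\alpha_n(d_1(i),\ldots,d_n(i))\delta_i\otimes b_0$ respectively; for $k>n$ they give $\alpha_n(d_1(i),\ldots,d_n(i))d_{n+1}\otimes\cdots\otimes d_k\otimes b_0$ and $\alpha_n(d_1(i),\ldots,d_n(i))\delta_i\otimes d_{n+1}\otimes\cdots\otimes d_k\otimes b_0$ respectively. For $\alpha_0\in B$: $V_{i,0}(\alpha_0)=\lambda(\alpha_0)$, $W_{i,0}(\alpha_0)=\lambda(\alpha_0)L_i$. *)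

From HB Require Import structures.
From mathcomp Require Import all_boot all_order all_algebra.
From mathcomp Require Import complex.
From Stdlib Require Import ClassicalEpsilon.
Import GRing.Theory Num.Theory.
Set Implicit Arguments. Unset Strict Implicit. Unset Printing Implicit Defensive.
Local Open Scope ring_scope.
Local Open Scope complex_scope.

Section Banach.
Variables (R : rcfType) (B : algType R[i]).

Definition cauchy_seq (nrm : B -> R) (u : nat -> B) : Prop :=
  forall e : R, 0 < e -> exists N : nat, forall m n : nat,
    (N <= m)%N -> (N <= n)%N -> nrm (u m - u n) < e.

Definition converges_to (nrm : B -> R) (u : nat -> B) (l : B) : Prop :=
  forall e : R, 0 < e -> exists N : nat, forall n : nat,
    (N <= n)%N -> nrm (u n - l) < e.

Definition banach_algebra_norm (nrm : B -> R) : Prop :=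
  [/\ (forall x, 0 <= nrm x),
      (forall x, nrm x = 0 -> x = 0),
      (forall x y, nrm (x + y) <= nrm x + nrm y),
      (forall (c : R[i]) x, (nrm (c *: x))%:C = `|c| * (nrm x)%:C) &
      (forall x y, nrm (x * y) <= nrm x * nrm y)]
  /\ (forall u, cauchy_seq nrm u -> exists l, converges_to nrm u l).

Definition upd n (x : 'I_n -> B) (j : 'I_n) (u : B) : 'I_n -> B :=
  fun k => if k == j then u else x k.

Definition bounded_multilinear (nrm : B -> R) n (f : ('I_n -> B) -> B) : Prop :=
  (forall (x : 'I_n -> B) (j : 'I_n) (c : R[i]) (u v : B),
      f (upd x j (c *: u + v)) = c *: f (upd x j u) + f (upd x j v))
  /\ exists M : R, forall x : 'I_n -> B, nrm (f x) <= M * \prod_(j < n) nrm (x j).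

End Banach.

(* The full Fock space, on its algebraic part.          *)
(* An elementary tensor is a pair (ds, b0) : seq D * B:                *)
(*   ([::], b0)               stands for  b0 Omega  (in B Omega)       *)
(*   ([:: d1; ..; dk], b0)    stands for  d1 (x) ... (x) dk (x) b0.    *)
(* A vector is a finite formal sum of elementary tensors, represented  *)
(* by the list of its summands.  Every operator of the paper maps an   *)
(* elementary tensor to a single elementary tensor or to 0, so it is   *)
(* given by a map tensor -> seq tensor, extended additively.           *)
Section Fock.
Variables (R : rcfType) (B : algType R[i]) (I : Type).

(* elements of D = l^1(I, B) are functions I -> B *)
Definition D := I -> B.
Definition tensor := (seq D * B)%type.
Definition fock := seq tensor.
Definition op := tensor -> seq tensor.

Definition app (T : op) (v : fock) : fock := flatten (map T v).
Definition opadd (S T : op) : op := fun t => S t ++ T t.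
Definition op0 : op := fun _ => [::].
Definition opsum (n : nat) (T : nat -> op) : op :=
  foldr (fun k acc => opadd (T k) acc) op0 (iota 0 n).

Definition Omega : fock := [:: ([::], 1)].

Definition P (v : fock) : B := \sum_(t <- v | nilp t.1) t.2.
Definition E (X : fock -> fock) : B := P (X Omega).

Definition delta (i : I) : D :=
  fun j => if excluded_middle_informative (j = i) then 1 else 0.

Definition actD (b : B) (d : D) : D := fun j => b * d j.

Definition lam (b : B) : op := fun t =>
  match t.1 with
  | [::] => [:: ([::], b * t.2)]
  | d1 :: ds => [:: (actD b d1 :: ds, t.2)]
  end.

Definition L (i : I) : op := fun t => [:: (delta i :: t.1, t.2)].

Definition comp (S T : op) : op := fun t => app S (T t).

(* \mathcal B_n(B): B_0 = B, and for n >= 1 (bounded multilinear) maps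
   B^n -> B; boundedness/multilinearity is imposed as a hypothesis in the
   theorem.  evalB n a x is a(x_1,..,x_n) (for n = 0 the element a). *)
Definition calB (n : nat) : Type :=
  match n with 0 => B | _.+1 => ('I_n -> B) -> B end.

Definition evalB (n : nat) : calB n -> ('I_n -> B) -> B :=
  match n as m return calB m -> ('I_m -> B) -> B with
  | 0 => fun a _ => a
  | _.+1 => fun a x => a x
  end.

Definition calB_ok (nrm : B -> R) (n : nat) : calB n -> Prop :=
  match n as m return calB m -> Prop with
  | 0 => fun _ => True
  | _.+1 => fun a => bounded_multilinear nrm a
  end.

Definition args (i : I) (n : nat) (ds : seq D) : 'I_n -> B :=
  fun j => nth (fun _ => 0) ds j i.

Definition V (i : I) (n : nat) : calB n -> op :=
  match n as m return calB m -> op with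
  | 0 => fun a0 => lam a0
  | n'.+1 => fun a t =>
      let k := size t.1 in
      if (k < n'.+1)%N then [::]
      else if k == n'.+1 then
        [:: ([::], a (args i t.1) * t.2)]
      else
        match drop n'.+1 t.1 with
        | dn1 :: rest => [:: (actD (a (args i t.1)) dn1 :: rest, t.2)]
        | [::] => [::]  (* impossible since k > n *)
        end
  end.

Definition W (i : I) (n : nat) : calB n -> op :=
  match n as m return calB m -> op with
  | 0 => fun a0 => comp (lam a0) (L i)
  | n'.+1 => fun a t =>
      let k := size t.1 in
      if (k < n'.+1)%N then [::]
      else if k == n'.+1 then
        [:: ([:: actD (a (args i t.1)) (delta i)], t.2)]
      else
        [:: (actD (a (args i t.1)) (delta i) :: drop n'.+1 t.1, t.2)]
  end.

Definition word (bs : seq B) (Y : op) : fock -> fock :=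
  foldr (fun b w => fun v => app (lam b) (app Y (w v))) id bs.

End Fock.

From Pilot Require Import Defs.
From HB Require Import structures.
From mathcomp Require Import all_boot all_order all_algebra.
From mathcomp Require Import complex.
From mathcomp Require Import reals.
From Stdlib Require Import ClassicalEpsilon FunctionalExtensionality.
Import GRing.Theory Num.Theory.
Local Open Scope ring_scope.
Local Open Scope complex_scope.

(* Grade the Fock space by tensor length.  V_{i,0}(a) = lambda(a) keeps the
   grade and W_{i,0}(a) raises it by one, while for n >= 1 the operators
   V_{i,n}, W_{i,n} never raise it and vanish below grade n.  Hence a word of
   m letters in X applied to Omega has grade at most m, and its grade-m part
   is the single tensor b_1 a_0 delta_i (x) ... (x) b_m a_0 delta_i (x) 1
   produced by the W_{i,0} terms alone.  In b_0 Y b_1 Y ... b_N Y Omega every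
   factor Y but the leftmost one therefore acts on grades < N, where Y = X;
   the leftmost one meets the grade-N tensor above, which V_{i,N}(a_N) sends
   to a_N(b_1 a_0, ..., b_N a_0) Omega, while W_{i,N}(a_N) never reaches
   B Omega. *)

Set Implicit Arguments. Unset Strict Implicit.

Section Operators.
Variables (R : rcfType) (B : algType R[i]) (I : Type).
Implicit Types (S T U : op B I) (t : tensor B I) (v w : fock B I).

Lemma app_cons T t v : app T (t :: v) = T t ++ app T v.
Proof. by []. Qed.

Lemma app_cat T v w : app T (v ++ w) = app T v ++ app T w.
Proof. by rewrite /app map_cat flatten_cat. Qed.

Lemma app_comp U T v : app (Defs.comp U T) v = app U (app T v).
Proof. by elim: v => // t v IH; rewrite !app_cons app_cat IH. Qed.

Lemma all_app (p : pred (tensor B I)) T v :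
  all p (app T v) = all (fun t => all p (T t)) v.
Proof. by elim: v => // t v IH; rewrite app_cons all_cat IH. Qed.

Lemma filter_app (p : pred (tensor B I)) T v :
  filter p (app T v) = app (fun t => filter p (T t)) v.
Proof. by elim: v => // t v IH; rewrite app_cons filter_cat IH. Qed.

Lemma eq_app_in (q : pred (tensor B I)) T T' v :
  all q v -> (forall t, q t -> T t = T' t) -> app T v = app T' v.
Proof. by elim: v => // t v IH /andP[qt qv] eqT; rewrite !app_cons eqT // IH. Qed.

Lemma app_filter_in (q p : pred (tensor B I)) T v :
  all q v -> (forall t, q t -> ~~ p t -> T t = [::]) ->
  app T v = app T (filter p v).
Proof.
elim: v => // t v IH /andP[qt qv] T0 /=.
by case: ifP => pt; rewrite !app_cons IH // T0 ?pt.
Qed.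

Lemma opsumS n (F : nat -> op B I) t :
  opsum n.+1 F t = F 0%N t ++ opsum n (fun k => F k.+1) t.
Proof. by rewrite /opsum /= -[1%N]addn0 iotaDl foldr_map. Qed.

Lemma all_opsum (p : pred (tensor B I)) n (F : nat -> op B I) t :
  all p (opsum n F t) = all (fun k => all p (F k t)) (iota 0 n).
Proof. by rewrite /opsum; elim: (iota 0 n) => //= k s IH; rewrite all_cat IH. Qed.

Lemma P_cat v w : P (v ++ w) = P v + P w.
Proof. by rewrite /P big_cat. Qed.

Lemma P_app T v : P (app T v) = \sum_(t <- v) P (T t).
Proof.
elim: v => [|t v IH]; first by rewrite /P !big_nil.
by rewrite app_cons P_cat IH big_cons.
Qed.

Lemma P_app_opadd U S T v :
  P (app U (app (opadd S T) v)) = P (app U (app S v)) + P (app U (app T v)).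
Proof.
rewrite -!app_comp !P_app -big_split; apply: eq_bigr => t _.
by rewrite /Defs.comp app_cat P_cat.
Qed.

Lemma P_eq0 v : all (fun t => ~~ nilp t.1) v -> P v = 0.
Proof.
by elim: v => [|t v IH] /=; rewrite /P ?big_nil // big_cons => /andP[/negbTE-> /IH].
Qed.

Lemma lam_size b t : all (fun u => size u.1 == size t.1) (lam b t).
Proof. by case: t => [[|d ds] c] /=; rewrite ?eqxx. Qed.

Lemma filter_size_app_lam (q : pred nat) c v :
  filter (fun u => q (size u.1)) (app (lam c) v) =
  app (lam c) (filter (fun u => q (size u.1)) v).
Proof.
elim: v => // [[[|d ds] x] v IH]; rewrite !app_cons filter_cat IH /=;
  by case: (q _).
Qed.

Lemma word_iotaS (b : nat -> B) k m T v :
  word [seq b j | j <- iota k m.+1] T v =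
  app (lam (b k)) (app T (word [seq b j | j <- iota k.+1 m] T v)).
Proof. by []. Qed.

End Operators.

Section VW.
Variables (R : rcfType) (B : algType R[i]) (I : Type) (i : I).
Implicit Types (t : tensor B I) (v : fock B I).

Lemma V_small n (a : calB B n.+1) t : (size t.1 < n.+1)%N -> V i a t = [::].
Proof. by move=> /= ->. Qed.

Lemma W_small n (a : calB B n.+1) t : (size t.1 < n.+1)%N -> W i a t = [::].
Proof. by move=> /= ->. Qed.

Lemma V_top n (a : calB B n.+1) t :
  size t.1 = n.+1 -> V i a t = [:: ([::], a (args i t.1) * t.2)].
Proof. by move=> /= ->; rewrite ltnn eqxx. Qed.

Lemma V_size_le n (a : calB B n.+1) t :
  all (fun u => size u.1 <= size t.1)%N (V i a t).
Proof.
rewrite /=; case: ifP => // _; case: ifP => // _.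
case def_ds: (drop n.+1 t.1) => [|d ds] //=.
by rewrite andbT -[(size ds).+1]/(size (d :: ds)) -def_ds size_drop leq_subr.
Qed.

Lemma W_size_le n (a : calB B n.+1) t :
  all (fun u => size u.1 <= size t.1)%N (W i a t).
Proof.
rewrite /=; case: ifP => // small; case: ifP => [/eqP-> //|_] /=.
by rewrite andbT size_drop subnSK ?leq_subr // leqNgt small.
Qed.

Lemma W_nonvacuum n (a : calB B n.+1) t : all (fun u => ~~ nilp u.1) (W i a t).
Proof. by rewrite /=; case: ifP => // _; case: ifP. Qed.

Lemma P_lam_W_eq0 n (a : calB B n.+1) c v : P (app (lam c) (app (W i a) v)) = 0.
Proof.
apply: P_eq0; rewrite !all_app; elim: v => //= t v ->; rewrite andbT.
apply: sub_all (W_nonvacuum a t) => u nonvac_u.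
by apply: sub_all (lam_size c u) => u'; rewrite /nilp => /eqP->.
Qed.

End VW.

Section Words.
Variables (R : rcfType) (B : algType R[i]) (I : Type) (i : I).
Variables (alpha : forall n, calB B n) (n : nat) (b : nat -> B).
Implicit Types t : tensor B I.

Local Notation X := (opsum n.+1 (fun k => opadd (V i (alpha k)) (W i (alpha k)))).
Local Notation X_tail := (opsum n (fun k => opadd (V i (alpha k.+1)) (W i (alpha k.+1)))).
Local Notation a0_delta := (actD (alpha 0%N) (delta B i)).

Lemma X_split t : X t = lam (alpha 0%N) t ++ (a0_delta :: t.1, t.2) :: X_tail t.
Proof. by rewrite opsumS /= -catA. Qed.

Lemma X_tail_size_le t : all (fun u => size u.1 <= size t.1)%N (X_tail t).
Proof.
rewrite all_opsum; elim: (iota 0 n) => //= k s ->.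
by rewrite all_cat V_size_le W_size_le.
Qed.

Lemma X_size_le t : all (fun u => size u.1 <= (size t.1).+1)%N (X t).
Proof.
rewrite X_split all_cat /= leqnn; apply/and3P; split=> //.
- by apply: sub_all (lam_size _ t) => u /eqP->.
- by apply: sub_all (X_tail_size_le t) => u /leqW.
Qed.

Lemma X_top m t : (size t.1 <= m)%N ->
  filter (fun u => size u.1 == m.+1) (X t) =
  if size t.1 == m then [:: (a0_delta :: t.1, t.2)] else [::].
Proof.
move=> t_le_m; pose top (u : tensor B I) := size u.1 == m.+1.
have no_top (s : fock B I) :
    all (fun u => size u.1 <= size t.1)%N s -> filter top s = [::].
  elim: s => //= u s IH /andP[u_le s_le].
  by rewrite ifN ?IH // /top neq_ltn ltnS (leq_trans u_le).
have lam_le : all (fun u => size u.1 <= size t.1)%N (lam (alpha 0%N) t).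
  by apply: sub_all (lam_size _ t) => u /eqP->.
rewrite X_split; move: (X_tail t) (X_tail_size_le t) => tail tail_le.
by rewrite filter_cat /= !no_top // /top /= eqSS; case: ifP.
Qed.

Definition top_tensor k m : tensor B I := ([seq actD (b j) a0_delta | j <- iota k m], 1).

Lemma size_top_tensor k m : size (top_tensor k m).1 = m.
Proof. by rewrite size_map size_iota. Qed.

Lemma word_X_size_le k m :
  all (fun t => size t.1 <= m)%N (word [seq b j | j <- iota k m] X (Omega B I)).
Proof.
elim: m k => [|m IH] k //; rewrite word_iotaS !all_app.
apply: sub_all (IH k.+1) => t t_le; apply: sub_all (X_size_le t) => u u_le.
by apply: sub_all (lam_size _ u) => u' /eqP->; rewrite (leq_trans u_le).
Qed.

Lemma word_X_top k m :
  filter (fun t => size t.1 == m) (word [seq b j | j <- iota k m] X (Omega B I)) =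
  [:: top_tensor k m].
Proof.
elim: m k => [|m IH] k //.
rewrite word_iotaS (filter_size_app_lam (eq_op^~ m.+1)) filter_app.
rewrite (app_filter_in (p := fun t => size t.1 == m) (word_X_size_le k.+1 m)); last first.
  by move=> t t_le /negbTE t_ne; rewrite X_top // t_ne.
by rewrite IH app_cons X_top ?size_top_tensor ?eqxx.
Qed.

Lemma word_opadd_low (Z : op B I) N k m :
  (forall t, (size t.1 < N)%N -> Z t = [::]) -> (m <= N)%N ->
  word [seq b j | j <- iota k m] (opadd X Z) (Omega B I) =
  word [seq b j | j <- iota k m] X (Omega B I).
Proof.
move=> Z_low; elim: m k => [|m IH] k // m_lt.
rewrite !word_iotaS IH ?(ltnW m_lt) //; congr (app _ _).
apply: (eq_app_in (T := opadd X Z) (word_X_size_le k.+1 m)) => t t_le.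
by rewrite /opadd Z_low ?cats0 // (leq_ltn_trans t_le).
Qed.

Lemma app_V_word_X k m (a : calB B m.+1) :
  app (V i a) (word [seq b j | j <- iota k m.+1] X (Omega B I)) =
  V i a (top_tensor k m.+1).
Proof.
rewrite (app_filter_in (p := fun t => size t.1 == m.+1) (T := V i a)
                       (word_X_size_le k m.+1)).
  by rewrite word_X_top app_cons cats0.
by move=> t t_le t_ne; rewrite V_small // ltn_neqAle t_ne.
Qed.

Lemma args_top_tensor k m :
  args i (top_tensor k m).1 = fun j : 'I_m => b (k + j) * alpha 0%N.
Proof.
apply: functional_extensionality => j.
rewrite /args /= (nth_map 0%N) ?size_iota // nth_iota // /actD /delta.
by case: (excluded_middle_informative (i = i)) => [_|//] /=; rewrite mulr1.
Qed.

End Words.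

Unset Implicit Arguments. Set Strict Implicit.

Theorem mainTheorem8
  (R : realType) (B : algType R[i]) (nrm : B -> R)
  (HB : banach_algebra_norm nrm)
  (I : Type)
  (N : nat) (HN : (1 <= N)%N)
  (alpha : forall n : nat, calB B n)
  (Halpha : forall n : nat, (n <= N)%N -> calB_ok nrm (alpha n))
  (i : I) (b : nat -> B) :
  let X : op B I := opsum N (fun n => opadd (V i (alpha n)) (W i (alpha n))) in
  let Y : op B I := opadd X (opadd (V i (alpha N)) (W i (alpha N))) in
  E (word [seq b j | j <- iota 0 N.+1] Y) =
    b 0%N * evalB (alpha N) (fun j : 'I_N => b j.+1 * alpha 0%N)
    + E (word [seq b j | j <- iota 0 N.+1] X).
Proof.
case: N HN Halpha => [//|n] _ _ X Y.
have Y_eq_X : word [seq b j | j <- iota 1 n.+1] Y (Omega B I) =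
              word [seq b j | j <- iota 1 n.+1] X (Omega B I).
  apply: word_opadd_low; last exact: leqnn.
  by move=> t t_small; rewrite /opadd V_small ?W_small.
rewrite /E !(word_iotaS b 0) Y_eq_X (P_app_opadd _ X) (P_app_opadd _ (V i _)).
rewrite P_lam_W_eq0 addr0 addrC app_V_word_X V_top; last exact: size_top_tensor.
rewrite args_top_tensor; congr (_ + _).
by rewrite app_cons /P big_cons big_nil /= mulr1 addr0.
Qed.
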